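(* Let $n,r\ge1$, $A_{-1}\in\mathbb{R}^{n\times n}$, $B\in\mathbb{R}^{n\times r}$, and let $A_2,A_3$ be $n\times n$ matrix functions on $[-1,0]$ with entries in $L_2([-1,0],\mathbb{C})$. For a matrix $M\in\mathbb{C}^{n\times n}$ define $$\Delta_M(\lambda)=\lambda I-\lambda e^{-\lambda}M-\lambda\int_{-1}^0e^{\lambda s}A_2(s)\,ds-\int_{-1}^0e^{\lambda s}A_3(s)\,ds,\quad\lambda\in\mathbb{C}.$$ Say that a pair $(M,B)$ satisfies conditions (i) and (ii) if: (i) $\operatorname{rank}(\Delta_M(\lambda)\ \ B)=n$ for every $\lambda\in\mathbb{C}$ (equivalently, there are no $\lambda\in\mathbb{C}$ and $y\in\mathbb{C}^n\setminus\{0\}$ with $\Delta_M(\lambda)^*y=0$ and $B^*y=0$); (ii) $\operatorname{rank}(B\ \ MB\ \cdots\ M^{n-1}B)=n$. If $(A_{-1},B)$ satisfies conditions (i) and (ii), then for every matrix $P\in\mathbb{C}^{r\times n}$ the pair $(A_{-1}+BP,B)$ satisfies conditions (i) and (ii) (with the same $A_2,A_3$). *)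

From HB Require Import structures.
From mathcomp Require Import all_boot all_order all_algebra.
From mathcomp Require Import all_classical all_reals.
From mathcomp Require Import topology normedtype sequences exp trigo measure
  lebesgue_measure lebesgue_integral.
From mathcomp Require Import complex.

Set Implicit Arguments.
Unset Strict Implicit.
Unset Printing Implicit Defensive.

Import Order.TTheory GRing.Theory Num.Theory.
Local Open Scope ring_scope.
Local Open Scope complex_scope.

Section Defs.
Variable R : realType.
Local Notation C := R[i].

Definition cexp (z : C) : C :=
  let: a +i* b := z in (expR a * cos b) +i* (expR a * sin b).

Definition reC (z : C) : R := let: a +i* _ := z in a.
Definition imC (z : C) : R := let: _ +i* b := z in b.

Definition Im10 : set R := `[(-1 : R), 0]%classic.

Definition cint (f : R -> C) : C :=
  (Rintegral lebesgue_measure Im10 (fun s => reC (f s)))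
  +i* (Rintegral lebesgue_measure Im10 (fun s => imC (f s))).

Definition L2c (f : R -> C) : Prop :=
  measurable_fun Im10 (fun s => reC (f s)) /\
  measurable_fun Im10 (fun s => imC (f s)) /\
  (\int[lebesgue_measure]_(s in Im10)
      ((reC (f s)) ^+ 2 + (imC (f s)) ^+ 2)%:E < +oo)%E.

Definition L2mx n (A : R -> 'M[C]_n) : Prop :=
  forall i j : 'I_n, L2c (fun s => A s i j).

Definition int_exp_mx n (lam : C) (A : R -> 'M[C]_n) : 'M[C]_n :=
  \matrix_(i, j) cint (fun s => cexp (lam * s%:C) * A s i j).

Definition Delta n (A2 A3 : R -> 'M[C]_n) (M : 'M[C]_n) (lam : C) : 'M[C]_n :=
  lam *: 1%:M - (lam * cexp (- lam)) *: M - lam *: int_exp_mx lam A2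
  - int_exp_mx lam A3.

Definition ctrl_mx n r (M : 'M[C]_n) (B : 'M[C]_(n, r)) :=
  \mxrow_(k < n) (M ^+ k *m B).

Definition cond_i n r (A2 A3 : R -> 'M[C]_n) (M : 'M[C]_n) (B : 'M[C]_(n, r))
  : Prop := forall lam : C, \rank (row_mx (Delta A2 A3 M lam) B) = n.

Definition cond_ii n r (M : 'M[C]_n) (B : 'M[C]_(n, r)) : Prop :=
  \rank (ctrl_mx M B) = n.

Definition cmx m n (A : 'M[R]_(m, n)) : 'M[C]_(m, n) := map_mx (fun x => x%:C) A.

End Defs.

From HB Require Import structures.
From mathcomp Require Import all_boot all_order all_algebra.
From mathcomp Require Import all_classical all_reals.
From mathcomp Require Import complex.

(* Both conditions say that a matrix has full row rank, i.e. trivial left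
   kernel.  A row vector y with y B = 0 does not see the feedback term B P:
   y Delta_{M + B P}(lam) = y Delta_M(lam), and if moreover y (M + B P)^k B = 0
   for all k < n, then inductively y (M + B P)^k = y M^k.  Hence the left
   kernels for M + B P are contained in those for M, which are trivial.
   Neither A_2, A_3 nor the reality of A_{-1} and B plays any role. *)

Set Implicit Arguments.
Unset Strict Implicit.
Unset Printing Implicit Defensive.

Import Order.TTheory GRing.Theory Num.Theory.
Local Open Scope ring_scope.
Local Open Scope complex_scope.

Lemma row_free_left_kerS (F : fieldType) n m m'
    (A : 'M[F]_(n, m)) (A' : 'M[F]_(n, m')) :
  (forall p (y : 'M[F]_(p, n)), y *m A' = 0 -> y *m A = 0) ->
  row_free A -> row_free A'.
Proof.
move=> kerA'A; rewrite -!kermx_eq0 => /eqP kerA0.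
rewrite -submx0 -kerA0; apply/sub_kermxP.
exact/kerA'A/mulmx_ker.
Qed.

Section Feedback.

Variables (R : realType) (n r : nat).
Implicit Types (M : 'M[R[i]]_n) (B : 'M[R[i]]_(n, r)) (P : 'M[R[i]]_(r, n)).

Lemma Delta_feedback (A2 A3 : R -> 'M[R[i]]_n) M B P lam :
  Delta A2 A3 (M + B *m P) lam =
  Delta A2 A3 M lam - (lam * cexp (- lam)) *: (B *m P).
Proof.
rewrite /Delta scalerDr opprD addrA.
by rewrite -!(addrAC _ (- (_ *: (B *m P)))).
Qed.

Lemma cond_i_feedback (A2 A3 : R -> 'M[R[i]]_n) M B P :
  cond_i A2 A3 M B -> cond_i A2 A3 (M + B *m P) B.
Proof.
move=> condM lam; apply/eqP; move: (condM lam) => /eqP.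
apply: row_free_left_kerS => p y.
rewrite !mul_mx_row Delta_feedback => /eqP.
rewrite row_mx_eq0 => /andP[/eqP yD /eqP yB].
move: yD; rewrite mulmxBr -scalemxAr mulmxA yB mul0mx scaler0 subr0 => ->.
by rewrite row_mx0.
Qed.

Lemma mul_ctrl_mx_eq0 p (y : 'M[R[i]]_(p, n)) M B :
  y *m ctrl_mx M B = 0 <-> forall k : 'I_n, y *m (M ^+ k *m B) = 0.
Proof.
rewrite /ctrl_mx mul_mxrow; split => [y0 k | yk0].
  by have := congr1 (fun X => submxrow X k) y0; rewrite mxrowK submxrow0.
by apply/mxrowP => k; rewrite mxrowK submxrow0.
Qed.

Lemma mulmx_feedback_exp p (y : 'M[R[i]]_(p, n)) M B P :
    (forall k : 'I_n, y *m ((M + B *m P) ^+ k *m B) = 0) ->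
  forall k, (k <= n)%N -> y *m (M + B *m P) ^+ k = y *m M ^+ k.
Proof.
move=> y0; elim=> [|k IHk] lt_kn; first by rewrite !expr0.
have le_kn := ltnW lt_kn.
have : y *m ((M + B *m P) ^+ k *m B) = 0 := y0 (Ordinal lt_kn).
rewrite mulmxA IHk // => yMkB.
by rewrite !exprSr !mulmxA IHk // mulmxDr mulmxA yMkB mul0mx addr0.
Qed.

Lemma ctrl_mx_feedback_left_ker p (y : 'M[R[i]]_(p, n)) M B P :
  y *m ctrl_mx (M + B *m P) B = 0 -> y *m ctrl_mx M B = 0.
Proof.
move=> /mul_ctrl_mx_eq0 y0; apply/mul_ctrl_mx_eq0 => k.
by rewrite mulmxA -(mulmx_feedback_exp y0 (ltnW (ltn_ord k))) -mulmxA.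
Qed.

Lemma cond_ii_feedback M B P : cond_ii M B -> cond_ii (M + B *m P) B.
Proof.
move=> /eqP condM; apply/eqP; move: condM.
by apply: row_free_left_kerS => p y; exact: ctrl_mx_feedback_left_ker.
Qed.

End Feedback.

Theorem lemma2 (R : realType) (n r : nat) (hn : (1 <= n)%N) (hr : (1 <= r)%N)
  (Am1 : 'M[R]_n) (B : 'M[R]_(n, r)) (A2 A3 : R -> 'M[R[i]]_n)
  (hA2 : L2mx A2) (hA3 : L2mx A3) :
  cond_i A2 A3 (cmx Am1) (cmx B) -> cond_ii (cmx Am1) (cmx B) ->
  forall P : 'M[R[i]]_(r, n),
    cond_i A2 A3 (cmx Am1 + cmx B *m P) (cmx B) /\
    cond_ii (cmx Am1 + cmx B *m P) (cmx B).
Proof.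
move=> condi condii P.
by split; [exact: cond_i_feedback | exact: cond_ii_feedback].
Qed.
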